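(* Let $T\in(0,\infty)$, let $X_0,X_1$ be Banach spaces with $X_1\hookrightarrow X_0$ densely and continuously, let $A\colon[0,T]\to\mathcal{L}(X_1,X_0)$ be strongly measurable in the strong operator topology, let $p\in(1,\infty)$, $\kappa\in[0,p-1)$, and suppose $A$ has maximal $L^p(0,T,w_\kappa)$-regularity. Then for any $0\le a<b\le T$ and $f\in L^p(a,b,w_\kappa;X_0)$ there exists a unique strong solution $u\in\mathrm{MR}^p(a,b,w_\kappa)$ of $u'+Au=f$ on $(a,b)$, $u(a)=0$, and \[\|u\|_{\mathrm{MR}^p(a,b,w_\kappa)}\le M_{p,\kappa,A}(0,T)\|f\|_{L^p(a,b,w_\kappa;X_0)}.\] In particular, $A$ has maximal $L^p(a,b,w_\kappa)$-regularity and $M_{p,\kappa,A}(a,b)\le M_{p,\kappa,A}(0,T)$.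
   Context: For $\mu\ge0$, $w_\mu(t)=|t|^\mu$ (never shifted, also on subintervals). $L^p(a,b,w_\kappa;X)$ is the space of strongly measurable $f\colon(a,b)\to X$ with $\int_a^bt^\kappa\|f(t)\|_X^pdt<\infty$, $W^{1,p}(a,b,w_\kappa;X)$ analogously, and $\mathrm{MR}^p(a,b,w_\kappa):=L^p(a,b,w_\kappa;X_1)\cap W^{1,p}(a,b,w_\kappa;X_0)$ with norm $\max\{\|u\|_{L^p(a,b,w_\kappa;X_1)},\|u\|_{W^{1,p}(a,b,w_\kappa;X_0)}\}$. A strong solution of $u'+Au=f$ on $(a,b)$, $u(a)=u_a$, is $u\in L^1(a,b;X_1)\cap W^{1,1}(a,b;X_0)$ with $Au\in L^1(a,b;X_0)$, $u(a)=u_a$ and $u'+Au=f$ a.e. on $(a,b)$. $A$ has maximal $L^p(a,b,w_\kappa)$-regularity if for every $f\in L^p(a,b,w_\kappa;X_0)$ there exists a unique strong solution $u\in\mathrm{MR}^p(a,b,w_\kappa)$ with $u(a)=0$, and there is a constant $C$ independent of $f$ such that for every $\tau\in(a,b]$ and every strong solution $v\in\mathrm{MR}^p(a,\tau,w_\kappa)$ of $v'+Av=f$ on $(a,\tau)$ with $v(a)=0$, $\|v\|_{\mathrm{MR}^p(a,\tau,w_\kappa)}\le C\|f\|_{L^p(a,\tau,w_\kappa;X_0)}$. The infimum of all such $C$ is $M_{p,\kappa,A}(a,b)$. *)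

From HB Require Import structures.
From mathcomp Require Import all_boot all_order all_algebra.
From mathcomp Require Import all_classical all_reals all_analysis.
Set Implicit Arguments. Unset Strict Implicit. Unset Printing Implicit Defensive.
Import Order.TTheory GRing.Theory Num.Theory.
Import numFieldNormedType.Exports.
Local Open Scope classical_set_scope.
Local Open Scope ring_scope.

Section Defs.
Variable R : realType.
Local Notation leb := (@lebesgue_measure R).

Definition simple_fun (V : normedModType R) (s : R -> V) : Prop :=
  exists r : seq (set R * V),
    (forall q, q \in r -> measurable q.1) /\
    s = fun t => \sum_(q <- r) (\1_(q.1) t : R) *: q.2.

Definition strongly_measurable (V : normedModType R) (D : set R)
    (f : R -> V) : Prop :=
  exists s : nat -> R -> V, (forall n, simple_fun (s n)) /\
    {ae leb, forall t, D t -> (fun n => s n t) @ \oo --> f t}.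

(* int_a^b |t|^kappa ||f t||^p dt  (weight w_kappa, never shifted) *)
Definition Lpw_int (V : normedModType R) (p kappa a b : R) (f : R -> V)
    : \bar R :=
  (\int[leb]_(t in [set` `]a, b[]) ((`|t| `^ kappa) * (`|f t| `^ p))%:E)%E.

Definition in_Lpw (V : normedModType R) (p kappa a b : R) (f : R -> V)
    : Prop :=
  strongly_measurable [set` `]a, b[] f /\ (Lpw_int p kappa a b f < +oo)%E.

Definition Lpw_norm (V : normedModType R) (p kappa a b : R) (f : R -> V)
    : R :=
  fine (Lpw_int p kappa a b f) `^ p^-1.

(* u : [a,b] -> V (continuous representative) is absolutely continuous
   with derivative g in L^1(a,b;V):  u t - u s = Bochner-int_s^t g,
   expressed through all continuous linear functionals (which is
   equivalent to the Bochner identity by Hahn-Banach). *)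
Definition W11_deriv (V : normedModType R) (a b : R) (u g : R -> V) : Prop :=
  in_Lpw 1 0 a b u /\ in_Lpw 1 0 a b g /\
  forall l : {linear V -> R^o}, continuous l ->
    forall s t, a <= s -> s <= t -> t <= b ->
      l (u t) - l (u s) =
        fine (\int[leb]_(x in [set` `[s, t]]) (l (g x))%:E)%E.

Variables (X0 X1 : normedModType R) (J : X1 -> X0) (A : R -> X1 -> X0).

(* The solution is
   given by: u : R -> X0 (its continuous representative on [a,b]),
   v : R -> X1 with u = J o v a.e. (u as an element of L^1(a,b;X1)),
   and g = u' (its weak derivative in X0). *)
Definition strong_sol (a b : R) (f : R -> X0) (ua : X0)
    (u : R -> X0) (v : R -> X1) (g : R -> X0) : Prop :=
  [/\ in_Lpw 1 0 a b v,
      {ae leb, forall t, [set` `]a, b[] t -> u t = J (v t)},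
      W11_deriv a b u g,
      in_Lpw 1 0 a b (fun t => A t (v t)) &
      u a = ua /\
      {ae leb, forall t, [set` `]a, b[] t -> g t + A t (v t) = f t}].

Definition in_MR (p kappa a b : R) (u : R -> X0) (v : R -> X1) (g : R -> X0)
    : Prop :=
  [/\ in_Lpw p kappa a b v, in_Lpw p kappa a b u & in_Lpw p kappa a b g].

Definition MR_norm (p kappa a b : R) (u : R -> X0) (v : R -> X1)
    (g : R -> X0) : R :=
  Num.max (Lpw_norm p kappa a b v)
          (Lpw_norm p kappa a b u + Lpw_norm p kappa a b g).

Definition MR_bound (p kappa a b C : R) : Prop :=
  forall f : R -> X0, in_Lpw p kappa a b f ->
  forall tau, a < tau -> tau <= b ->
  forall u v g, strong_sol a tau f 0 u v g -> in_MR p kappa a tau u v g ->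
    MR_norm p kappa a tau u v g <= C * Lpw_norm p kappa a tau f.

Definition max_reg (p kappa a b : R) : Prop :=
  (forall f : R -> X0, in_Lpw p kappa a b f ->
     (exists u v g, strong_sol a b f 0 u v g /\ in_MR p kappa a b u v g) /\
     (forall u1 v1 g1 u2 v2 g2,
        strong_sol a b f 0 u1 v1 g1 -> in_MR p kappa a b u1 v1 g1 ->
        strong_sol a b f 0 u2 v2 g2 -> in_MR p kappa a b u2 v2 g2 ->
        {in [set` `[a, b]], u1 =1 u2})) /\
  exists C, MR_bound p kappa a b C.

Definition M_const (p kappa a b : R) : \bar R :=
  ereal_inf [set C%:E | C in [set C : R | 0 <= C /\ MR_bound p kappa a b C]].

End Defs.

From HB Require Import structures.
From mathcomp Require Import all_boot all_order all_algebra.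
From mathcomp Require Import all_classical all_reals all_analysis.
From mathcomp Require Import measurable_realfun.
Import Order.TTheory GRing.Theory Num.Theory.
Import numFieldNormedType.Exports.
Local Open Scope classical_set_scope.
Local Open Scope ring_scope.

(* Extending by zero a solution on [(a, tau)] gives a solution on [(0, tau)] of
   the problem with zero-extended right-hand side, with the same norms.  Hence
   every constant admissible on [(0, T)] is admissible on [(a, b)], which bounds
   [M(a, b)] and gives uniqueness on [(a, b)].  For existence, solve on [(0, T)]
   with the zero-extended right-hand side: on [(0, a)] the solution solves the
   homogeneous problem with zero initial value, so it vanishes at [a], and its
   restriction to [(a, b)] is the required solution, whose norm is dominated by
   the norm on [(0, b)].

   Since the solution concept only sees [X0] through continuous functionals,
   "vanishes at [a]" means "is annihilated by every continuous functional";
   uniqueness on [(0, T)] itself shows that these functionals separate points. *)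

Section integral_nonmeasurable.
Local Open Scope ereal_scope.
Context d (T : measurableType d) (R : realType).
Variable mu : {measure set T -> \bar R}.
Import HBNNSimple.

Let nnintegral (f : T -> \bar R) := ereal_sup [set sintegral mu h |
  h in [set h : {nnsfun T >-> R} | forall x, (h x)%:E <= f x]].

Let integralE_nnintegral D f : \int[mu]_(x in D) f x =
  nnintegral ((f \_ D) ^\+) - nnintegral ((f \_ D) ^\-).
Proof. by []. Qed.

(* A simple function below [f] is, after removing the null set where [f <= g]
   fails, a simple function below [g] with the same integral. *)
Let ae_le_nnintegral (f g : T -> \bar R) : (forall x, 0 <= g x) ->
  {ae mu, forall x, f x <= g x} -> nnintegral f <= nnintegral g.
Proof.
move=> g0 [N [mN N0 sN]].
apply: ge_ereal_sup => _ [h /= hf <-].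
pose h' := mul_nnsfun h (indic_nnsfun R (measurableC mN)).
apply: ereal_sup_ubound; exists h' => /=.
  move=> x; rewrite mindicE; case: (boolP (x \in ~` N)) => [/set_mem xN|_].
    rewrite mulr1; apply: le_trans (hf x) _.
    by apply: contrapT => /negP; rewrite -ltNge => gf; apply/xN/sN => /=; rewrite leNgt gf.
  by rewrite mulr0.
have sintegralE (k : {nnsfun T >-> R}) : sintegral mu k = \int[mu]_x (k x)%:E.
  by rewrite integral_nnsfun// patch_setT.
rewrite !sintegralE.
apply: ae_eq_integral => //; [exact/measurable_EFinP|exact/measurable_EFinP|].
exists N; split => // x /= /not_implyP [_ hx]; apply: contrapT => Nx; apply: hx.
by rewrite /= mindicE (_ : x \in ~` N) ?mulr1//; exact: mem_set.
Qed.

Lemma ae_ge0_le_integral_nonmeas (D : set T) (f g : T -> \bar R) :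
  (forall x, D x -> 0 <= f x) -> (forall x, D x -> 0 <= g x) ->
  {ae mu, forall x, D x -> f x <= g x} ->
  \int[mu]_(x in D) f x <= \int[mu]_(x in D) g x.
Proof.
move=> f0 g0 fg; rewrite !ge0_integralE//.
apply: ae_le_nnintegral => [x|]; first by rewrite patchE; case: ifPn => // /set_mem /g0.
by apply: filterS fg => x fgx; rewrite !patchE; case: ifPn => // /set_mem /fgx.
Qed.

Lemma ae_eq_integral_nonmeas (D : set T) (f g : T -> \bar R) : ae_eq mu D f g ->
  \int[mu]_(x in D) f x = \int[mu]_(x in D) g x.
Proof.
move=> fg; rewrite !integralE_nnintegral.
by congr (_ - _); apply/le_anti/andP; split; apply: ae_le_nnintegral => //;
  apply: filterS fg => x fgx; rewrite ?funeposE ?funenegE !patchE;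
  case: ifPn => // /set_mem /fgx ->.
Qed.

End integral_nonmeasurable.

Lemma lebesgue_ae_neq {R : realType} (a : R) :
  {ae @lebesgue_measure R, forall t, t != a}.
Proof.
exists [set a]; split => //; first exact: lebesgue_measure_set1.
by move=> t /= /negP; rewrite negbK => /eqP.
Qed.

(* Typeclass search does not find this instance of [ae_filter_ringOfSetsType]
   by itself. *)
#[local] Instance lebesgue_ae_filter (R : realType) :
  Filter (nbhs (almost_everywhere (@lebesgue_measure R))) :=
  ae_filter_ringOfSetsType _.

Lemma in_set_itv {R : realType} (i : interval R) (x : R) :
  (x \in [set` i]) = (x \in i).
Proof. by apply/idP/idP => [/set_mem|/mem_set]. Qed.

Lemma itvoo_widen {R : realType} {c d c' d' t : R} : c' <= c -> d <= d' ->
  c < t < d -> c' < t < d'.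
Proof.
by move=> c'c dd' /andP[ct td]; rewrite (le_lt_trans c'c ct) (lt_le_trans td dd').
Qed.

Section strongly_measurable.
Context {R : realType} {V : normedModType R}.
Local Notation leb := (@lebesgue_measure R).
Implicit Types (D : set R) (f : R -> V).

Lemma simple_fun0 : simple_fun (fun _ : R => 0 : V).
Proof. by exists [::]; split => //; apply/funext => t; rewrite big_nil. Qed.

Lemma simple_funB (s1 s2 : R -> V) : simple_fun s1 -> simple_fun s2 ->
  simple_fun (fun t => s1 t - s2 t).
Proof.
move=> [r1 [m1 ->]] [r2 [m2 ->]].
exists (r1 ++ map (fun q => (q.1, - q.2)) r2); split.
  by move=> q; rewrite mem_cat => /orP[/m1|/mapP[q' /m2 ? ->]].
apply/funext => t; rewrite big_cat big_map /= -sumrN; congr (_ + _).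
by apply: eq_bigr => q _; rewrite scalerN.
Qed.

Lemma simple_funZindic (A : set R) (s : R -> V) : measurable A ->
  simple_fun s -> simple_fun (fun t => (\1_A t : R) *: s t).
Proof.
move=> mA [r [m ->]].
exists (map (fun q => (q.1 `&` A, q.2)) r); split.
  by move=> q /mapP[q' /m ? ->]; exact: measurableI.
apply/funext => t; rewrite big_map scaler_sumr; apply: eq_bigr => q _ /=.
by rewrite indicI /= scalerA mulrC.
Qed.

(* Induction on the list of pairs: on each [q.1] and on its complement, the
   function is a shorter sum with a shifted base point [w]. *)
Lemma simple_fun_measurable_comp (s : R -> V) (psi : V -> R) : simple_fun s ->
  measurable_fun setT (psi \o s).
Proof.
move=> [r [m ->]].
suff shifted : forall (w : V) (phi : V -> R), measurable_fun setT
    (fun t => phi (w + \sum_(q <- r) (\1_(q.1) t : R) *: q.2)).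
  by have := shifted 0 psi; under eq_fun do rewrite add0r.
elim: r m => [|q r IH] m w phi.
  by under eq_fun do rewrite big_nil; exact: measurable_cst.
have mq : measurable q.1 by apply: m; rewrite mem_head.
have {}IH := IH (fun q' qr => m q' (@mem_behead _ (q :: r) _ qr)).
have -> : (fun t => phi (w + \sum_(q0 <- q :: r) (\1_(q0.1) t : R) *: q0.2)) =
  (fun t => \1_(q.1) t * phi ((w + q.2) + \sum_(q0 <- r) (\1_(q0.1) t : R) *: q0.2)
   + (1 - \1_(q.1) t) * phi (w + \sum_(q0 <- r) (\1_(q0.1) t : R) *: q0.2)).
  apply/funext => t; rewrite big_cons indicE; case: (t \in q.1) => /=.
    by rewrite scale1r mul1r subrr mul0r addr0 addrA.
  by rewrite scale0r add0r mul0r add0r subr0 mul1r.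
have mindic : measurable_fun setT (\1_(q.1) : R -> R) by exact: measurable_indic.
apply: measurable_funD; apply: measurable_funM => //.
exact: measurable_funB.
Qed.

Lemma strongly_measurable0 D : strongly_measurable D (fun _ => 0 : V).
Proof.
exists (fun _ _ => 0); split; first by move=> n; exact: simple_fun0.
by apply: nearW => t _; exact: cvg_cst.
Qed.

Lemma strongly_measurable_ae_eq {D f} g :
  {ae leb, forall t, D t -> g t = f t} ->
  strongly_measurable D f -> strongly_measurable D g.
Proof.
move=> fg [s [ss sf]]; exists s; split => //.
by apply: filterS2 sf fg => t sft fgt Dt; rewrite fgt//; exact: sft.
Qed.

Lemma strongly_measurableS {D D' f} : D' `<=` D ->
  strongly_measurable D f -> strongly_measurable D' f.
Proof.
move=> D'D [s [ss sf]]; exists s; split => //.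
by apply: filterS sf => t sft /D'D.
Qed.

Lemma strongly_measurableB {D f g} : strongly_measurable D f ->
  strongly_measurable D g -> strongly_measurable D (fun t => f t - g t).
Proof.
move=> [s1 [ss1 sf]] [s2 [ss2 sg]].
exists (fun n t => s1 n t - s2 n t); split.
  by move=> n; exact: simple_funB.
by apply: filterS2 sf sg => t sft sgt Dt; apply: cvgB; [exact: sft|exact: sgt].
Qed.

Lemma strongly_measurable_patch {D} D' {f} : measurable D ->
  strongly_measurable D f ->
  strongly_measurable D' (fun t => if t \in D then f t else 0).
Proof.
move=> mD [s [ss sf]].
exists (fun n t => (\1_D t : R) *: s n t); split.
  by move=> n; exact: simple_funZindic.
apply: filterS sf => t sft _; rewrite indicE; case: ifPn => [/set_mem Dt|_].
  by under eq_fun do rewrite scale1r; exact: sft.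
by under eq_fun do rewrite scale0r; exact: cvg_cst.
Qed.

Lemma strongly_measurable_comp_ae {D f} {psi : V -> R} : measurable D ->
  continuous psi -> strongly_measurable D f ->
  exists G : R -> R, measurable_fun setT G /\
    {ae leb, forall t, D t -> psi (f t) = G t}.
Proof.
move=> mD cpsi [s [ss [N [mN N0 sN]]]].
pose E := ~` N `&` D.
have mE : measurable E by apply: measurableI => //; exact: measurableC.
have sfE t : t \in E -> (fun n => s n t) @ \oo --> f t.
  move=> /set_mem [Nt Dt]; apply: contrapT => sft; apply/Nt/sN.
  by move=> /(_ Dt).
exists (fun t => if t \in E then psi (f t) else 0); split.
  apply: (measurable_fun_cvg (h := fun n t => \1_E t * psi (s n t))).
    move=> n; apply: measurable_funM; first exact: measurable_indic.
    exact: simple_fun_measurable_comp.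
  move=> t _; rewrite indicE; case: ifPn => tE.
    under eq_fun do rewrite mul1r.
    exact: (continuous_cvg _ (cpsi (f t)) (sfE t tE)).
  by under eq_fun do rewrite mul0r; exact: cvg_cst.
exists N; split => // t /= ftE; apply: contrapT => Nt; apply: ftE => Dt.
by rewrite (_ : t \in E); last exact: mem_set.
Qed.

End strongly_measurable.

Section weighted_Lp.
Context {R : realType} {V : normedModType R}.
Local Notation leb := (@lebesgue_measure R).
Implicit Types (p kappa c d : R) (f g : R -> V).

Let measurable_weighted p kappa {D : set R} (mD : measurable D) (G : R -> R) :
  measurable_fun setT G ->
  measurable_fun D (fun t => (`|t| `^ kappa * G t `^ p)%:E).
Proof.
move=> mG; apply/measurable_EFinP/measurable_funM; apply: measurable_funTS => //.
  exact: measurableT_comp (@measurable_powR R kappa) (@normr_measurable R setT).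
exact: measurableT_comp (@measurable_powR R p) mG.
Qed.

Let weighted_ge0 kappa p (t : R) (x : V) : 0 <= `|t| `^ kappa * `|x| `^ p.
Proof. by rewrite mulr_ge0 // powR_ge0. Qed.

Lemma Lpw_int_ge0 p kappa c d f : (0 <= Lpw_int p kappa c d f)%E.
Proof. by apply: integral_ge0 => t _; rewrite lee_fin weighted_ge0. Qed.

Lemma Lpw_norm_ge0 p kappa c d f : 0 <= Lpw_norm p kappa c d f.
Proof. exact: powR_ge0. Qed.

Lemma Lpw_int_fin_num {p kappa c d f} : (Lpw_int p kappa c d f < +oo)%E ->
  Lpw_int p kappa c d f \is a fin_num.
Proof. by rewrite ge0_fin_numE ?Lpw_int_ge0. Qed.

Lemma Lpw_int_subitv p kappa {c d c' d'} f : c' <= c -> d <= d' ->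
  (Lpw_int p kappa c d f <= Lpw_int p kappa c' d' f)%E.
Proof.
move=> c'c dd'; rewrite /Lpw_int [leLHS]integral_mkcond [leRHS]integral_mkcond.
apply: ae_ge0_le_integral_nonmeas.
- by move=> t _; apply: erestrict_ge0 => x _; rewrite lee_fin weighted_ge0.
- by move=> t _; apply: erestrict_ge0 => x _; rewrite lee_fin weighted_ge0.
apply: nearW => t _; rewrite !patchE !in_set_itv !in_itv /=.
case: ifPn => [ctd|_]; first by rewrite (itvoo_widen c'c dd' ctd).
by case: ifPn; rewrite lee_fin ?weighted_ge0.
Qed.

Lemma eq_Lpw_int p kappa {c d f g} : (forall t, c < t < d -> g t = f t) ->
  Lpw_int p kappa c d g = Lpw_int p kappa c d f.
Proof. by move=> fg; apply: eq_integral => t; rewrite in_set_itv in_itv /= => /fg ->. Qed.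

Lemma Lpw_int_patch {p kappa c d c' d' f g} : 0 < p -> c' <= c -> d <= d' ->
  {ae leb, forall t, c' < t < d' -> g t = if c < t < d then f t else 0} ->
  Lpw_int p kappa c' d' g = Lpw_int p kappa c d f.
Proof.
move=> p0 c'c dd' gE; rewrite /Lpw_int integral_mkcond [in RHS]integral_mkcond.
apply: ae_eq_integral_nonmeas; apply: filterS gE => t gE _.
rewrite !patchE !in_set_itv !in_itv /=; case: ifPn => [c't|c't]; case: ifPn => [ct|ct] //.
- by rewrite gE // ct.
- by rewrite gE // (negbTE ct) normr0 powR0 ?mulr0 // gt_eqF.
- by rewrite (itvoo_widen c'c dd' ct) in c't.
Qed.

Lemma Lpw_norm_patch {p kappa c d c' d' f g} : 0 < p -> c' <= c -> d <= d' ->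
  {ae leb, forall t, c' < t < d' -> g t = if c < t < d then f t else 0} ->
  Lpw_norm p kappa c' d' g = Lpw_norm p kappa c d f.
Proof. by move=> p0 c'c dd' gE; rewrite /Lpw_norm (Lpw_int_patch p0 c'c dd' gE). Qed.

Lemma Lpw_norm_subitv {p kappa c d c' d' f} : 0 < p -> c <= c' -> d' <= d ->
  (Lpw_int p kappa c d f < +oo)%E ->
  Lpw_norm p kappa c' d' f <= Lpw_norm p kappa c d f.
Proof.
move=> p0 cc' d'd fin; have le_int := Lpw_int_subitv p kappa f cc' d'd.
apply: ge0_ler_powR; rewrite ?nnegrE ?fine_ge0 ?Lpw_int_ge0 //; first by rewrite invr_ge0 ltW.
have fin' := le_lt_trans le_int fin.
exact: fine_le (Lpw_int_fin_num fin') (Lpw_int_fin_num fin) le_int.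
Qed.

Lemma Lpw_int0 p kappa c d : 0 < p -> Lpw_int p kappa c d (fun _ => 0 : V) = 0%E.
Proof. by move=> p0; apply: integral0_eq => t _; rewrite normr0 powR0 ?mulr0 // gt_eqF. Qed.

Lemma Lpw_norm0 p kappa c d : 0 < p -> Lpw_norm p kappa c d (fun _ => 0 : V) = 0.
Proof. by move=> p0; rewrite /Lpw_norm Lpw_int0 //= powR0 // invr_eq0 gt_eqF. Qed.

Lemma in_Lpw0 p kappa c d : 0 < p -> in_Lpw p kappa c d (fun _ => 0 : V).
Proof. by move=> p0; split; [exact: strongly_measurable0|rewrite Lpw_int0]. Qed.

Lemma in_Lpw_subitv {p kappa c d c' d' f} : c <= c' -> d' <= d ->
  in_Lpw p kappa c d f -> in_Lpw p kappa c' d' f.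
Proof.
move=> cc' d'd [sm fin]; split; last exact: le_lt_trans (Lpw_int_subitv _ _ _ cc' d'd) fin.
by apply: strongly_measurableS sm => t /=; rewrite !in_itv /=; exact: itvoo_widen.
Qed.

Lemma eq_in_Lpw {p kappa c d f} g : (forall t, c < t < d -> g t = f t) ->
  in_Lpw p kappa c d f -> in_Lpw p kappa c d g.
Proof.
move=> fg [sm fin]; split; last by rewrite (eq_Lpw_int _ _ fg).
by apply: strongly_measurable_ae_eq sm; apply: nearW => t /=; rewrite in_itv; exact: fg.
Qed.

Lemma in_Lpw_patch {p kappa c d c' d' f g} : 0 < p -> c' <= c -> d <= d' ->
  {ae leb, forall t, c' < t < d' -> g t = if c < t < d then f t else 0} ->
  in_Lpw p kappa c d f -> in_Lpw p kappa c' d' g.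
Proof.
move=> p0 c'c dd' gE [sm fin]; split; last by rewrite (Lpw_int_patch p0 c'c dd' gE).
apply: strongly_measurable_ae_eq (strongly_measurable_patch _ (measurable_itv _) sm).
by apply: filterS gE => t gE /=; rewrite in_itv /= => /gE ->; rewrite in_set_itv in_itv /=.
Qed.

Lemma Lpw_int_measurable_version p kappa {c d g} :
  strongly_measurable [set` `]c, d[] g ->
  exists G : R -> R, [/\ measurable_fun setT G, (forall t, 0 <= G t),
    {ae leb, forall t, c < t < d -> `|g t| = G t} &
    Lpw_int p kappa c d g =
      (\int[leb]_(t in [set` `]c, d[]) ((`|t| `^ kappa) * (G t `^ p))%:E)%E].
Proof.
move=> sm.
have [G [mG gG]] := strongly_measurable_comp_ae (measurable_itv _) (@norm_continuous _ V) sm.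
have {}gG : {ae leb, forall t, c < t < d -> `|g t| = `|G t|}.
  by apply: filterS gG => t gG ctd; rewrite -gG ?normr_id //= in_itv.
exists (fun t => `|G t|); split => //.
- exact: measurableT_comp (@normr_measurable R setT) mG.
- by apply: ae_eq_integral_nonmeas; apply: filterS gG => t gG /=; rewrite in_itv => /gG ->.
Qed.

Lemma powR_normB_le p (x y : V) : 0 < p ->
  `|x - y| `^ p <= 2 `^ p * (`|x| `^ p + `|y| `^ p).
Proof.
move=> p0; wlog xy : x y / `|x| <= `|y|.
  move=> H; have [|/ltW yx] := leP `|x| `|y|; first exact: H.
  by rewrite -normrN opprB [X in _ <= _ * X]addrC; exact: H.
apply: (@le_trans _ _ ((2 * `|y|) `^ p)).
  apply: ge0_ler_powR; rewrite ?nnegrE ?mulr_ge0 //; first exact: ltW.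
  by apply: le_trans (ler_normB _ _) _; rewrite mulr2n mulrDl mul1r lerD2r.
by rewrite powRM // ler_wpM2l ?powR_ge0 // lerDr powR_ge0.
Qed.

Lemma Lpw_intB_le {p kappa c d f g} : 0 < p ->
  strongly_measurable [set` `]c, d[] f -> strongly_measurable [set` `]c, d[] g ->
  (Lpw_int p kappa c d (fun t => (f t - g t)%R) <=
     (2 `^ p)%:E * (Lpw_int p kappa c d f + Lpw_int p kappa c d g))%E.
Proof.
move=> p0 smf smg.
have [F [mF F0 fF ->]] := Lpw_int_measurable_version p kappa smf.
have [G [mG G0 gG ->]] := Lpw_int_measurable_version p kappa smg.
have mw := measurable_weighted p kappa (measurable_itv `]c, d[).
have w0 (H : R -> R) t : [set` `]c, d[] t -> (0 <= (`|t| `^ kappa * H t `^ p)%:E)%E.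
  by move=> _; rewrite lee_fin mulr_ge0 ?powR_ge0.
rewrite -ge0_integralD ?measurable_itv //; [|exact: w0|exact: mw|exact: w0|exact: mw].
rewrite -(@ge0_integralZl_EFin _ (measurableTypeR R) _ leb _ (measurable_itv _)) ?powR_ge0 //;
  [|by move=> t ctd; rewrite adde_ge0 ?w0|by apply: emeasurable_funD; exact: mw].
apply: ae_ge0_le_integral_nonmeas.
- by move=> t _; rewrite lee_fin weighted_ge0.
- by move=> t ctd; rewrite mule_ge0 ?adde_ge0 ?w0 // lee_fin powR_ge0.
apply: filterS2 fF gG => t fF gG /=; rewrite in_itv /= => ctd.
rewrite -EFinD -EFinM lee_fin -(fF ctd) -(gG ctd) -mulrDr mulrCA ler_wpM2l ?powR_ge0 //.
exact: powR_normB_le.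
Qed.

Lemma in_LpwB {p kappa c d f g} : 0 < p ->
  in_Lpw p kappa c d f -> in_Lpw p kappa c d g ->
  in_Lpw p kappa c d (fun t => f t - g t).
Proof.
move=> p0 [smf finf] [smg fing]; split; first exact: strongly_measurableB.
apply: le_lt_trans (Lpw_intB_le p0 smf smg) _.
by rewrite -(fineK (Lpw_int_fin_num finf)) -(fineK (Lpw_int_fin_num fing)) -EFinD -EFinM ltry.
Qed.

(* The weight [|t|^kappa] vanishes only at [t = 0], a null set. *)
Lemma Lpw_norm_eq0_ae {p kappa c d g} : 0 < p -> in_Lpw p kappa c d g ->
  Lpw_norm p kappa c d g = 0 -> {ae leb, forall t, c < t < d -> g t = 0}.
Proof.
move=> p0 [sm fin] /powR_eq0_eq0 norm0.
have int0 : Lpw_int p kappa c d g = 0%E by rewrite -(fineK (Lpw_int_fin_num fin)) norm0.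
have [G [mG G0 gG intE]] := Lpw_int_measurable_version p kappa sm.
have mH := measurable_weighted p kappa (measurable_itv `]c, d[) _ mG.
have : ae_eq leb [set` `]c, d[] (fun t => (`|t| `^ kappa * G t `^ p)%:E) (cst 0%E).
  apply/(@ae_eq_integral_abs _ (measurableTypeR R) _ leb _ (measurable_itv _) _ mH).
  by rewrite -[RHS]int0 intE; apply: eq_integral => t _ /=; rewrite ger0_norm ?mulr_ge0 ?powR_ge0.
move=> H0; apply: filterS3 gG H0 (lebesgue_ae_neq 0) => t gG {}H0 t0 ctd.
have /eqP := H0 (ltac:(by rewrite /= in_itv)); rewrite eqe mulf_eq0 => /orP[|/eqP/powR_eq0_eq0 Gt].
  by rewrite gt_eqF // powR_gt0 // normr_gt0.
by apply/eqP; rewrite -normr_eq0 gG // Gt.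
Qed.

End weighted_Lp.

Section sobolev_W11.
Context {R : realType} {V : normedModType R}.
Local Notation leb := (@lebesgue_measure R).
Implicit Types (c d s t : R) (u g : R -> V).

Lemma ae_itvcc_itvoo {c d s t} : c <= s -> t <= d ->
  {ae leb, forall x, s <= x <= t -> c < x < d}.
Proof.
move=> cs td; apply: filterS2 (lebesgue_ae_neq c) (lebesgue_ae_neq d) => x xc xd.
move=> /andP[sx xt]; rewrite !lt_neqAle eq_sym xc xd.
by rewrite (le_trans cs sx) (le_trans xt td).
Qed.

Lemma integral_itvcc_ae_eq {c d s t} {F G : R -> \bar R} : c <= s -> t <= d ->
  {ae leb, forall x, c < x < d -> F x = G x} ->
  (\int[leb]_(x in [set` `[s, t]]) F x = \int[leb]_(x in [set` `[s, t]]) G x)%E.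
Proof.
move=> cs td FG; apply: ae_eq_integral_nonmeas.
by apply: filterS2 FG (ae_itvcc_itvoo cs td) => x FG cxd /=; rewrite in_itv => /cxd.
Qed.

Lemma linear_integrable_version (l : {linear V -> R^o}) {c d g} :
  continuous l -> in_Lpw 1 0 c d g ->
  exists G : R -> R, [/\ measurable_fun setT G,
    {ae leb, forall x, c < x < d -> l (g x) = G x} &
    forall s t, c <= s -> t <= d -> leb.-integrable [set` `[s, t]] (EFin \o G)].
Proof.
move=> cl [sm fin].
have [G [mG gG]] := strongly_measurable_comp_ae (measurable_itv _) cl sm.
have [N [mN N0 gN intE]] := Lpw_int_measurable_version 1 0 sm.
have [k k0 lk] : exists2 k, 0 < k & forall x, `|l x| <= k * `|x|.
  have /linear_boundedP [y [_ ly]] := proj2 (linear_bounded_continuous l) cl.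
  by exists (Num.max 1 (y + 1)); [rewrite lt_max ltr01|apply: ly; rewrite lt_max ltrDl ltr01 orbT].
exists G; split => // s t cs td; apply/integrableP; split.
  exact/measurable_EFinP/measurable_funTS.
apply: le_lt_trans (_ : _ <= \int[leb]_(x in [set` `]c, d[]) (k * N x)%:E)%E _.
  rewrite [leLHS]integral_mkcond [leRHS]integral_mkcond.
  apply: ae_ge0_le_integral_nonmeas => [x _|x _|].
  - by apply: erestrict_ge0 => y _; exact: abse_ge0.
  - by apply: erestrict_ge0 => y _; rewrite lee_fin mulr_ge0 // ltW.
  apply: filterS3 gG gN (ae_itvcc_itvoo cs td) => x gG gN cxd _.
  rewrite !patchE; case: ifPn => [/set_mem|_]; last first.
    by case: ifPn; rewrite // lee_fin mulr_ge0 // ltW.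
  rewrite /= in_itv /= => /cxd {}cxd.
  by rewrite in_set_itv in_itv /= cxd /= lee_fin -gG // -gN.
under eq_integral do rewrite EFinM.
rewrite (@ge0_integralZl_EFin _ (measurableTypeR R) _ leb _ (measurable_itv _)) ?ltW //.
- have -> : (\int[leb]_(x in [set` `]c, d[]) (N x)%:E)%E = Lpw_int 1 0 c d g.
    by rewrite intE; apply: eq_integral => x _; rewrite powRr0 mul1r powRr1.
  by rewrite -(fineK (Lpw_int_fin_num fin)) -EFinM ltry.
- by move=> x _; rewrite lee_fin.
- exact/measurable_EFinP/measurable_funTS.
Qed.

Lemma W11_deriv_subitv {c d c' d' u g} : c <= c' -> d' <= d ->
  W11_deriv c d u g -> W11_deriv c' d' u g.
Proof.
move=> cc' d'd [iu [ig ug]]; split; first exact: in_Lpw_subitv cc' d'd iu.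
split; first exact: in_Lpw_subitv cc' d'd ig.
by move=> l cl s t c's st td'; apply: ug => //; [exact: le_trans c's|exact: le_trans d'd].
Qed.

Lemma eq_W11_deriv {c d u} u' {g} : (forall t, c < t < d -> u' t = u t) ->
  (forall l : {linear V -> R^o}, continuous l -> forall t, l (u' t) = l (u t)) ->
  W11_deriv c d u g -> W11_deriv c d u' g.
Proof.
move=> uu' lu' [iu [ig ug]]; split; first exact: eq_in_Lpw uu' iu.
by split => // l cl s t cs st td; rewrite !lu' //; exact: ug.
Qed.

Lemma W11_deriv_ae0 {c d u g} : W11_deriv c d u g ->
  {ae leb, forall t, c < t < d -> g t = 0} ->
  forall l : {linear V -> R^o}, continuous l ->
  forall s t, c <= s -> s <= t -> t <= d -> l (u t) = l (u s).
Proof.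
move=> [_ [_ ug]] g0 l cl s t cs st td; apply/eqP; rewrite -subr_eq0; apply/eqP.
rewrite (ug l cl s t cs st td) (integral_itvcc_ae_eq (G := fun=> 0%E) cs td) ?integral0 //.
by apply: filterS g0 => x g0 cxd; rewrite g0 // linear0.
Qed.

Lemma W11_derivB {c d u1 u2 g1 g2} :
  W11_deriv c d u1 g1 -> W11_deriv c d u2 g2 ->
  W11_deriv c d (fun t => u1 t - u2 t) (fun t => g1 t - g2 t).
Proof.
move=> [iu1 [ig1 ug1]] [iu2 [ig2 ug2]].
split; first exact: in_LpwB ltr01 iu1 iu2.
split; first exact: in_LpwB ltr01 ig1 ig2.
move=> l cl s t cs st td.
have [G1 [_ gG1 iG1]] := linear_integrable_version l cl ig1.
have [G2 [_ gG2 iG2]] := linear_integrable_version l cl ig2.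
have lgE (g : R -> V) (G : R -> R) : {ae leb, forall x, c < x < d -> l (g x) = G x} ->
    (\int[leb]_(x in [set` `[s, t]]) (l (g x))%:E)%E =
    (\int[leb]_(x in [set` `[s, t]]) (G x)%:E)%E.
  by move=> gG; apply: integral_itvcc_ae_eq cs td _; apply: filterS gG => x gG /gG ->.
rewrite !linearB /= addrACA -opprD (ug1 l cl s t cs st td) (ug2 l cl s t cs st td).
rewrite (lgE _ _ gG1) (lgE _ _ gG2) (lgE _ (fun x => G1 x - G2 x)); last first.
  by apply: filterS2 gG1 gG2 => x gG1 gG2 cxd; rewrite linearB /= gG1 // gG2.
rewrite (@integralB_EFin _ (measurableTypeR R) _ leb _ G1 G2 (measurable_itv _)) ?iG1 ?iG2 //.
have fin_int (G : R -> R) : leb.-integrable [set` `[s, t]] (EFin \o G) ->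
    (\int[leb]_(x in [set` `[s, t]]) (G x)%:E)%E \is a fin_num.
  exact: (@integrable_fin_num _ (measurableTypeR R) _ leb _ (measurable_itv _)).
by rewrite [RHS]fineB // fin_int ?iG1 ?iG2.
Qed.

End sobolev_W11.

Definition zext {R : realType} {W : nmodType} (a : R) (h : R -> W) : R -> W :=
  fun t => if t < a then 0 else h t.

Section zero_extension.
Context {R : realType} {V : normedModType R}.
Local Notation leb := (@lebesgue_measure R).

Lemma zext_ae c a d (h : R -> V) :
  {ae leb, forall t, c < t < d -> zext a h t = if a < t < d then h t else 0}.
Proof.
apply: filterS (lebesgue_ae_neq a) => t t_lt_a /andP[_ td]; rewrite /zext.
by have [/ltW|a_le_t] := ltP t a; [rewrite ltNge => ->|rewrite lt_neqAle eq_sym t_lt_a a_le_t td].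
Qed.

Lemma in_Lpw_zext {p kappa c a d} {h : R -> V} : 0 < p -> c <= a ->
  in_Lpw p kappa a d h -> in_Lpw p kappa c d (zext a h).
Proof. by move=> p0 ca; apply: in_Lpw_patch p0 ca (lexx d) (zext_ae c a d h). Qed.

Lemma Lpw_norm_zext {p kappa c a d} {h : R -> V} : 0 < p -> c <= a ->
  Lpw_norm p kappa c d (zext a h) = Lpw_norm p kappa a d h.
Proof. by move=> p0 ca; rewrite (Lpw_norm_patch p0 ca (lexx d) (zext_ae c a d h)). Qed.

Lemma integral_itvcc_zext {s a t} (F : R -> \bar R) : s <= a ->
  (\int[leb]_(x in [set` `[s, t]]) zext a F x =
     \int[leb]_(x in [set` `[a, t]]) F x)%E.
Proof.
move=> s_le_a; rewrite [LHS]integral_mkcond [RHS]integral_mkcond; congr integral.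
apply/funext => x; rewrite !patchE !in_set_itv !in_itv /= /zext.
by have [xa|ax] := ltP x a; [case: ifP|rewrite (le_trans s_le_a ax)].
Qed.

Lemma W11_deriv_zext {c a d} {u g : R -> V} : c <= a -> u a = 0 ->
  W11_deriv a d u g -> W11_deriv c d (zext a u) (zext a g).
Proof.
move=> ca ua0 [iu [ig ug]]; split; first exact: in_Lpw_zext.
split => [|l cl s t _ st td]; first exact: in_Lpw_zext.
have lzext x : (l (zext a g x))%:E = zext a (fun y => (l (g y))%:E) x.
  by rewrite /zext; case: ifP; rewrite ?linear0.
under eq_integral do rewrite lzext.
have [t_lt_a|a_le_t] := ltP t a.
  rewrite /zext (le_lt_trans st t_lt_a) t_lt_a subrr integral0_eq //= => x.
  by rewrite in_itv /= => /andP[_ xt]; rewrite (le_lt_trans xt t_lt_a).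
have [s_le_a|a_le_s] := ltP s a.
  rewrite integral_itvcc_zext ?ltW // -(ug l cl a t (lexx a) a_le_t td) /zext.
  by rewrite s_le_a ltNge a_le_t /= ua0.
rewrite /zext [s < a]ltNge a_le_s [t < a]ltNge (le_trans a_le_s st) /= (ug l cl s t a_le_s st td).
congr fine; apply: eq_integral => x; rewrite in_set_itv in_itv /= => /andP[sx _].
by rewrite ltNge (le_trans a_le_s sx).
Qed.

End zero_extension.

Section strong_solutions.
Context {R : realType} {X0 X1 : normedModType R}.
Context {J : {linear X1 -> X0}} {A : R -> {linear X1 -> X0}}.
Local Notation sol := (strong_sol J (fun t => A t)).
Implicit Types (p kappa c d a : R) (f u g : R -> X0) (v : R -> X1).

Lemma strong_sol_subitv {c d c' d' f ua u v g} : c <= c' -> d' <= d ->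
  sol c d f ua u v g -> sol c' d' f (u c') u v g.
Proof.
move=> cc' d'd [iv uJv ug iAv [_ eq_f]].
have sub_itv t : [set` `]c', d'[] t -> [set` `]c, d[] t.
  by rewrite /= !in_itv; exact: itvoo_widen.
split; [exact: in_Lpw_subitv iv| |exact: W11_deriv_subitv ug|exact: in_Lpw_subitv iAv|].
  by apply: filterS uJv => t uJvt /sub_itv.
by split; last by apply: filterS eq_f => t eq_ft /sub_itv.
Qed.

Lemma eq_strong_sol_rhs {c d f} f' {ua u v g} : (forall t, c < t < d -> f' t = f t) ->
  sol c d f ua u v g -> sol c d f' ua u v g.
Proof.
move=> ff' [iv uJv ug iAv [ua0 eq_f]]; split => //; split => //.
apply: filterS eq_f => t eq_ft ctd.
have /ff' -> : c < t < d by move: ctd; rewrite /= in_itv.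
exact: eq_ft.
Qed.

Lemma eq_strong_sol {c d f ua u} u' {v g} : (forall t, c < t < d -> u' t = u t) ->
  (forall l : {linear X0 -> R^o}, continuous l -> forall t, l (u' t) = l (u t)) ->
  sol c d f ua u v g -> sol c d f (u' c) u' v g.
Proof.
move=> uu' lu' [iv uJv ug iAv [_ eq_f]]; split => //.
- by apply: filterS uJv => t uJvt ctd; rewrite uu' ?uJvt //; rewrite /= in_itv in ctd.
- exact: eq_W11_deriv uu' lu' ug.
Qed.

Lemma strong_solB {c d f1 f2 ua1 ua2 u1 u2 v1 v2 g1 g2} :
  sol c d f1 ua1 u1 v1 g1 -> sol c d f2 ua2 u2 v2 g2 ->
  sol c d (fun t => f1 t - f2 t) (ua1 - ua2) (fun t => u1 t - u2 t)
    (fun t => v1 t - v2 t) (fun t => g1 t - g2 t).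
Proof.
move=> [iv1 uJv1 ug1 iAv1 [<- eq_f1]] [iv2 uJv2 ug2 iAv2 [<- eq_f2]]; split.
- exact: in_LpwB ltr01 iv1 iv2.
- by apply: filterS2 uJv1 uJv2 => t uJv1 uJv2 ctd; rewrite linearB -uJv1 -?uJv2.
- exact: W11_derivB ug1 ug2.
- apply: eq_in_Lpw (in_LpwB ltr01 iAv1 iAv2) => t _; exact: linearB.
- split => //; apply: filterS2 eq_f1 eq_f2 => t eq_f1 eq_f2 ctd.
  by rewrite linearB addrACA -opprD eq_f1 ?eq_f2.
Qed.

Lemma strong_sol_zext {c a d f u v g} : c <= a ->
  sol a d f 0 u v g -> sol c d (zext a f) 0 (zext a u) (zext a v) (zext a g).
Proof.
move=> ca [iv uJv ug iAv [ua0 eq_f]].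
split.
- exact: in_Lpw_zext ltr01 ca iv.
- apply: filterS2 uJv (lebesgue_ae_neq a) => t uJvt ta /=; rewrite in_itv /= /zext.
  case: (ltP t a) => [_ _|a_le_t /andP[_ td]]; first by rewrite linear0.
  by apply: uJvt; rewrite /= in_itv /= td andbT lt_neqAle eq_sym ta.
- exact: W11_deriv_zext.
- apply: eq_in_Lpw (in_Lpw_zext ltr01 ca iAv) => t _; rewrite /zext.
  by case: ifP; rewrite ?linear0.
- split.
    rewrite /zext; case: (ltP c a) => // ac.
    by have -> : c = a by apply/le_anti; rewrite ca ac.
  apply: filterS2 eq_f (lebesgue_ae_neq a) => t eq_ft ta /=; rewrite in_itv /= /zext.
  case: (ltP t a) => [_ _|a_le_t /andP[_ td]]; first by rewrite linear0 addr0.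
  by apply: eq_ft; rewrite /= in_itv /= td andbT lt_neqAle eq_sym ta.
Qed.

Lemma in_MR_subitv {p kappa c d c' d' u v g} : c <= c' -> d' <= d ->
  in_MR p kappa c d u v g -> in_MR p kappa c' d' u v g.
Proof. by move=> cc' d'd [iv iu ig]; split; exact: in_Lpw_subitv cc' d'd _. Qed.

Lemma eq_in_MR {p kappa c d u} u' {v g} : (forall t, c < t < d -> u' t = u t) ->
  in_MR p kappa c d u v g -> in_MR p kappa c d u' v g.
Proof. by move=> uu' [iv iu ig]; split; [exact: iv|exact: eq_in_Lpw uu' iu|exact: ig]. Qed.

Lemma in_MRB {p kappa c d u1 u2 v1 v2 g1 g2} : 0 < p ->
  in_MR p kappa c d u1 v1 g1 -> in_MR p kappa c d u2 v2 g2 ->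
  in_MR p kappa c d (fun t => u1 t - u2 t) (fun t => v1 t - v2 t)
    (fun t => g1 t - g2 t).
Proof. by move=> p0 [iv1 iu1 ig1] [iv2 iu2 ig2]; split; exact: in_LpwB. Qed.

Lemma in_MR_zext {p kappa c a d u v g} : 0 < p -> c <= a ->
  in_MR p kappa a d u v g -> in_MR p kappa c d (zext a u) (zext a v) (zext a g).
Proof. by move=> p0 ca [iv iu ig]; split; exact: in_Lpw_zext. Qed.

Lemma eq_MR_norm {p kappa c d u} u' {v g} : (forall t, c < t < d -> u' t = u t) ->
  MR_norm p kappa c d u' v g = MR_norm p kappa c d u v g.
Proof. by move=> uu'; rewrite /MR_norm /Lpw_norm (eq_Lpw_int _ _ uu'). Qed.

Lemma MR_norm_zext {p kappa c a d u v g} : 0 < p -> c <= a ->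
  MR_norm p kappa c d (zext a u) (zext a v) (zext a g) = MR_norm p kappa a d u v g.
Proof. by move=> p0 ca; rewrite /MR_norm !Lpw_norm_zext. Qed.

Lemma MR_norm_subitv {p kappa c d c' d' u v g} : 0 < p -> c <= c' -> d' <= d ->
  in_MR p kappa c d u v g -> MR_norm p kappa c' d' u v g <= MR_norm p kappa c d u v g.
Proof.
move=> p0 cc' d'd [[_ fin_v] [_ fin_u] [_ fin_g]].
by rewrite /MR_norm le_max2 ?lerD ?Lpw_norm_subitv.
Qed.

Lemma Lpw_norm_deriv_le_MR_norm {p kappa c d u v g} :
  Lpw_norm p kappa c d g <= MR_norm p kappa c d u v g.
Proof. by rewrite /MR_norm le_max lerDr Lpw_norm_ge0 orbT. Qed.

End strong_solutions.

Section maximal_regularity.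
Context {R : realType} {X0 X1 : normedModType R}.
Context {J : {linear X1 -> X0}} {A : R -> {linear X1 -> X0}}.
Local Notation sol := (strong_sol J (fun t => A t)).
Local Notation bound := (MR_bound J (fun t => A t)).
Implicit Types (p kappa c d a b C : R) (f u g : R -> X0) (v : R -> X1).

Lemma MR_bound_homogeneous {p kappa c d C tau u v g} : 0 < p ->
  bound p kappa c d C -> c < tau -> tau <= d ->
  sol c tau (fun _ => 0) 0 u v g -> in_MR p kappa c tau u v g ->
  forall l : {linear X0 -> R^o}, continuous l ->
  forall t, c <= t -> t <= tau -> l (u t) = 0.
Proof.
move=> p0 B ctau taud s m l cl t ct ttau.
have := B _ (in_Lpw0 p kappa c d p0) tau ctau taud u v g s m.
rewrite Lpw_norm0 // mulr0 => MR0.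
have g0 : Lpw_norm p kappa c tau g = 0.
  by apply/le_anti; rewrite Lpw_norm_ge0 andbT (le_trans Lpw_norm_deriv_le_MR_norm MR0).
have [_ _ ig] := m; case: s => _ _ ug _ [u0 _].
by rewrite (W11_deriv_ae0 ug (Lpw_norm_eq0_ae p0 ig g0) l cl c t (lexx c) ct ttau) u0 linear0.
Qed.

(* A jump of a solution at [d] by a vector invisible to all continuous
   functionals yields another solution, so uniqueness forces the vector to be
   zero. *)
Lemma max_reg_separates {p kappa c d} : c < d -> 0 < p ->
  max_reg J (fun t => A t) p kappa c d ->
  forall x : X0, (forall l : {linear X0 -> R^o}, continuous l -> l x = 0) -> x = 0.
Proof.
move=> cd p0 [EU _] x lx0.
have [[u [v [g [s m]]]] uniq] := EU _ (in_Lpw0 p kappa c d p0).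
pose u' t := if t == d then u t + x else u t.
have uu' t : c < t < d -> u' t = u t by move=> /andP[_ td]; rewrite /u' lt_eqF.
have lu' (l : {linear X0 -> R^o}) : continuous l -> forall t, l (u' t) = l (u t).
  by move=> cl t; rewrite /u'; case: eqP => // _; rewrite linearD lx0 // addr0.
have s' := eq_strong_sol u' uu' lu' s.
rewrite {1}/u' lt_eqF // (_ : u c = 0) in s'; last by case: s => _ _ _ _ [].
have dcd : d \in [set` `[c, d]] by rewrite in_set_itv in_itv /= lexx ltW.
have := uniq u' v g u v g s' (eq_in_MR u' uu' m) s m d dcd.
by rewrite /u' eqxx => /(congr1 (fun y => y - u d)); rewrite addrAC !subrr add0r.
Qed.

Lemma MR_bound_le {p kappa c d C C'} : C <= C' ->
  bound p kappa c d C -> bound p kappa c d C'.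
Proof.
move=> CC' B f fL tau ctau taud u v g s m.
by apply: le_trans (B f fL tau ctau taud u v g s m) _; rewrite ler_wpM2r ?Lpw_norm_ge0.
Qed.

Lemma MR_bound_zext {p kappa c a b T C} : 0 < p -> c <= a -> b <= T ->
  bound p kappa c T C -> bound p kappa a b C.
Proof.
move=> p0 ca bT B f fL tau atau taub u v g s m.
pose F t := if a < t < b then f t else 0.
have FL : in_Lpw p kappa c T F by apply: in_Lpw_patch p0 ca bT _ fL; exact: nearW.
have Ff t : t < tau -> F t = if a < t < tau then f t else 0.
  by move=> ttau; rewrite /F ttau (lt_le_trans ttau taub) !andbT.
have sF : sol c tau F 0 (zext a u) (zext a v) (zext a g).
  have Fzext t : c < t < tau -> F t = zext a F t.
    by move=> _; rewrite /zext /F; case: (ltP t a) => // ta; rewrite ltNge (ltW ta).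
  have sF : sol a tau F 0 u v g.
    by apply: (eq_strong_sol_rhs F _ s) => t /andP[a_lt_t ttau]; rewrite Ff // a_lt_t ttau.
  exact: (eq_strong_sol_rhs F Fzext (strong_sol_zext ca sF)).
have := B F FL tau (le_lt_trans ca atau) (le_trans taub bT) _ _ _ sF (in_MR_zext p0 ca m).
have Fpatch : {ae lebesgue_measure, forall t, c < t < tau ->
    F t = if a < t < tau then f t else 0}.
  by apply: nearW => t /andP[_ ttau]; exact: Ff.
by rewrite (MR_norm_zext p0 ca) (Lpw_norm_patch p0 ca (lexx tau) Fpatch).
Qed.

Lemma strong_sol_unique {p kappa a b C} :
  (forall x : X0, (forall l : {linear X0 -> R^o}, continuous l -> l x = 0) -> x = 0) ->
  0 < p -> a < b -> bound p kappa a b C ->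
  forall f u1 v1 g1 u2 v2 g2,
    sol a b f 0 u1 v1 g1 -> in_MR p kappa a b u1 v1 g1 ->
    sol a b f 0 u2 v2 g2 -> in_MR p kappa a b u2 v2 g2 ->
    {in [set` `[a, b]], u1 =1 u2}.
Proof.
move=> sep p0 ab B f u1 v1 g1 u2 v2 g2 s1 m1 s2 m2 t.
rewrite in_set_itv in_itv /= => /andP[a_le_t t_le_b].
have s := eq_strong_sol_rhs (fun _ => 0) (fun t _ => esym (subrr (f t))) (strong_solB s1 s2).
rewrite subr0 in s.
apply/eqP; rewrite -subr_eq0; apply/eqP/sep => l cl.
exact: MR_bound_homogeneous p0 B ab (lexx b) s (in_MRB p0 m1 m2) l cl t a_le_t t_le_b.
Qed.

Lemma sol_vanishing_rhs_invisible {p kappa c a T C F u v g} :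
  0 < p -> c <= a -> a <= T -> bound p kappa c T C ->
  (forall t, c < t < a -> F t = 0) ->
  sol c T F 0 u v g -> in_MR p kappa c T u v g ->
  forall l : {linear X0 -> R^o}, continuous l -> l (u a) = 0.
Proof.
move=> p0 ca aT B F0 s m l cl.
have [<-|ca'] := eqVneq c a; first by case: s => _ _ _ _ [-> _]; rewrite linear0.
have {}ca : c < a by rewrite lt_neqAle ca' ca.
have sa := eq_strong_sol_rhs (fun _ => 0) (fun t ct => esym (F0 t ct)) (strong_sol_subitv (lexx c) aT s).
rewrite (_ : u c = 0) in sa; last by case: s => _ _ _ _ [].
exact: MR_bound_homogeneous p0 B ca aT sa (in_MR_subitv (lexx c) aT m) l cl a (ltW ca) (lexx a).
Qed.

(* The value at [a] is reset to [0]: it is only known to be annihilated by all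
   continuous functionals. *)
Lemma strong_sol_exists {p kappa c a b T} {f : R -> X0} :
  0 < p -> c <= a -> a < b -> b <= T ->
  max_reg J (fun t => A t) p kappa c T -> in_Lpw p kappa a b f ->
  exists u v g, [/\ sol a b f 0 u v g, in_MR p kappa a b u v g &
    forall C, bound p kappa c T C ->
      MR_norm p kappa a b u v g <= C * Lpw_norm p kappa a b f].
Proof.
move=> p0 ca ab bT [EU [C0 B0]] fL.
pose F t := if a < t < b then f t else 0.
have FL : in_Lpw p kappa c T F by apply: in_Lpw_patch p0 ca bT _ fL; exact: nearW.
have [[u [v [g [s m]]]] _] := EU F FL.
have aT := ltW (lt_le_trans ab bT).
have F0 t : c < t < a -> F t = 0 by move=> /andP[_ ta]; rewrite /F ltNge (ltW ta).
have lua := sol_vanishing_rhs_invisible p0 ca aT B0 F0 s m.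
pose u' t := if t == a then 0 else u t.
have uu' t : a < t < b -> u' t = u t by move=> /andP[a_lt_t _]; rewrite /u' gt_eqF.
have lu' (l : {linear X0 -> R^o}) : continuous l -> forall t, l (u' t) = l (u t).
  by move=> cl t; rewrite /u'; case: eqP => [->|//]; rewrite linear0 lua.
have sab := strong_sol_subitv ca bT s.
have FE t : a < t < b -> f t = F t by rewrite /F => ->.
exists u', v, g; split.
- have s' := eq_strong_sol u' uu' lu' (eq_strong_sol_rhs f FE sab).
  by rewrite {1}/u' eqxx in s'.
- exact: (eq_in_MR u' uu' (in_MR_subitv ca bT m)).
move=> C B; rewrite (eq_MR_norm u' uu').
have scb := strong_sol_subitv (lexx c) bT s.
rewrite (_ : u c = 0) in scb; last by case: s => _ _ _ _ [].
have cb := le_lt_trans ca ab.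
apply: le_trans (MR_norm_subitv p0 ca (lexx b) (in_MR_subitv (lexx c) bT m)) _.
have Fpatch : {ae lebesgue_measure, forall t, c < t < b -> F t = F t} by exact: nearW.
rewrite -(Lpw_norm_patch p0 ca (lexx b) Fpatch).
exact: B F FL b cb bT u v g scb (in_MR_subitv (lexx c) bT m).
Qed.

Lemma le_mul_M_const {p kappa c d} (m n : R) : 0 <= n ->
  (exists C, bound p kappa c d C) ->
  (forall C, 0 <= C -> bound p kappa c d C -> m <= C * n) ->
  (m%:E <= M_const J (fun t => A t) p kappa c d * n%:E)%E.
Proof.
move=> n0 [C0 B0] mn.
have [n_eq0|n_neq0] := eqVneq n 0.
  have B0' : bound p kappa c d (Num.max C0 0) by apply: MR_bound_le B0; rewrite le_max lexx.
  have C_ge0 : 0 <= Num.max C0 0 by rewrite le_max lexx orbT.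
  have := mn _ C_ge0 B0'.
  by rewrite n_eq0 mulr0 mule0 lee_fin.
have {n_neq0 n0} n_gt0 : 0 < n by rewrite lt_neqAle eq_sym n_neq0.
rewrite -lee_pdivrMr ?lte_fin // -EFinM.
apply: le_ereal_inf_tmp => _ [C [C_ge0 BC] <-].
by rewrite lee_fin ler_pdivrMr //; exact: mn.
Qed.

Lemma le_M_const {p kappa c d c' d'} :
  (forall C, bound p kappa c' d' C -> bound p kappa c d C) ->
  (M_const J (fun t => A t) p kappa c d <= M_const J (fun t => A t) p kappa c' d')%E.
Proof.
move=> BB; apply: ereal_inf_le_tmp => _ [C [C_ge0 BC] <-].
by exists C => //; split => //; exact: BB.
Qed.

End maximal_regularity.

Theorem lemma2p2 (R : realType) (X0 X1 : completeNormedModType R)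
  (J : {linear X1 -> X0}) (T : R) (A : R -> {linear X1 -> X0}) (p kappa : R) :
  0 < T ->
  continuous J -> injective J -> closure (range J) = setT ->
  (forall t, [set` `[0, T]] t -> continuous (A t)) ->
  (forall x : X1, strongly_measurable [set` `[0, T]] (fun t => A t x)) ->
  1 < p -> 0 <= kappa -> kappa < p - 1 ->
  max_reg J (fun t => A t) p kappa 0 T ->
  forall a b, 0 <= a -> a < b -> b <= T ->
  (forall f : R -> X0, in_Lpw p kappa a b f ->
     (exists u v g, [/\ strong_sol J (fun t => A t) a b f 0 u v g,
        in_MR p kappa a b u v g &
        ((MR_norm p kappa a b u v g)%:E <=
           M_const J (fun t => A t) p kappa 0 T * (Lpw_norm p kappa a b f)%:E)%E]) /\
     (forall u1 v1 g1 u2 v2 g2,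
        strong_sol J (fun t => A t) a b f 0 u1 v1 g1 -> in_MR p kappa a b u1 v1 g1 ->
        strong_sol J (fun t => A t) a b f 0 u2 v2 g2 -> in_MR p kappa a b u2 v2 g2 ->
        {in [set` `[a, b]], u1 =1 u2})) /\
  max_reg J (fun t => A t) p kappa a b /\
  (M_const J (fun t => A t) p kappa a b <= M_const J (fun t => A t) p kappa 0 T)%E.
Proof.
move=> T0 _ _ _ _ _ p1 _ _ mr a b a0 ab bT.
have p0 : 0 < p := lt_trans ltr01 p1.
have [_ [C0 B0]] := mr.
have Bab C : MR_bound J (fun t => A t) p kappa 0 T C ->
    MR_bound J (fun t => A t) p kappa a b C := MR_bound_zext p0 a0 bT.
have uniq := strong_sol_unique (max_reg_separates T0 p0 mr) p0 ab (Bab C0 B0).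
have ex (f : R -> X0) := strong_sol_exists (f := f) p0 a0 ab bT mr.
split; [|split; [split; [|by exists C0; exact: Bab]|]].
- move=> f fL; split; last exact: uniq.
  have [u [v [g [s m bnd]]]] := ex f fL; exists u, v, g; split => //.
  apply: le_mul_M_const (Lpw_norm_ge0 _ _ _ _ _) _ _; first by exists C0.
  by move=> C _ /bnd.
- move=> f fL; split; last exact: uniq.
  by have [u [v [g [s m _]]]] := ex f fL; exists u, v, g.
- by apply: le_M_const => C; exact: Bab.
Qed.
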